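(* Consider the following setting. Let $\mathcal{Z}=\mathcal{Z}_1\times\cdots\times\mathcal{Z}_N\subset\mathbb{R}^n$ be a product of nonempty convex compact sets, and for each $i$ let $C_i:\mathcal{Z}_i\to\mathbb{R}$ be twice differentiable with $\nabla^2 C_i(z_i)\succeq\sigma_c I$ for some $\sigma_c>0$ and with Lipschitz continuous gradient on $\mathcal{Z}_i$. Let $g(z)=Rz+g_0$ be an affine map $\mathbb{R}^n\to\mathbb{R}^m$ with $\|R\|_F\le\sigma_g$, $\sigma_g>0$, and assume the convex problem $\min\{\sum_i C_i(z_i): z\in\mathcal{Z},\ g(z)\le 0\}$ satisfies Slater's condition. Fix $\phi>0$, let $\mathcal{L}(z,\mu)=\sum_i C_i(z_i)+\mu^\top g(z)-\frac{\phi}{2}\|\mu\|^2$, $h(\mu)=\min_{z\in\mathcal{Z}}\mathcal{L}(z,\mu)$, let $(z^*,\mu^* )$ be the unique saddle point of $\mathcal{L}$ over $\mathcal{Z}\times\mathbb{R}^m_{\ge0}$, and let $\sigma_h>0$ satisfy $(\nabla h(\mu)-\nabla h(\tilde\mu))^\top(\mu-\tilde\mu)\le-\sigma_h\|\mu-\tilde\mu\|^2$ for all $\mu,\tilde\mu\ge0$. Suppose there are no discrete decision variables, so the algorithm is the deterministic dual gradient method: from $\mu(1)\ge0$, $z(k+1)=\arg\min_{z\in\mathcal{Z}}\mathcal{L}(z,\mu(k))$ and $\mu(k+1)=[\mu(k)+\varepsilon(g(z(k+1))-\phi\mu(k))]_+$. If $0<\varepsilon<2\sigma_h/(\sigma_g^2/\sigma_c+\phi)^2$,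 then $\lim_{k\to\infty}\|\mu(k)-\mu^*\|^2=0$ and $\lim_{k\to\infty}\|z(k)-z^*\|^2=0$.
   Context: $[\cdot]_+$ denotes componentwise projection onto the nonnegative orthant; $\|\cdot\|$ is the Euclidean norm and $\|\cdot\|_F$ the Frobenius norm. *)

From HB Require Import structures.
From mathcomp Require Import all_boot all_order all_algebra.
From mathcomp Require Import all_classical all_reals all_analysis.
Set Implicit Arguments. Unset Strict Implicit. Unset Printing Implicit Defensive.
Import Order.TTheory GRing.Theory Num.Theory.
Import numFieldNormedType.Exports.
Local Open Scope classical_set_scope.
Local Open Scope ring_scope.

Section Defs.
Variable R : realType.

(* Euclidean geometry on row vectors 'rV[R]_k (the library norm on matrices
   is the max norm, so the Euclidean quantities are written out). *)
Definition dotr k (u v : 'rV[R]_k) : R := \sum_(j < k) u 0 j * v 0 j.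
Definition sqnorm k (v : 'rV[R]_k) : R := \sum_(j < k) v 0 j ^+ 2.
Definition enorm k (v : 'rV[R]_k) : R := Num.sqrt (sqnorm v).
Definition nonneg k (v : 'rV[R]_k) : Prop := forall j, 0 <= v 0 j.
Definition projpos k (v : 'rV[R]_k) : 'rV[R]_k := \row_j Num.max (v 0 j) 0.
Definition frob2 p q (A : 'M[R]_(p, q)) : R := \sum_(a < p) \sum_(b < q) A a b ^+ 2.

Definition cvxset k (S : set 'rV[R]_k) : Prop :=
  forall x y (t : R), S x -> S y -> 0 <= t <= 1 -> S (t *: x + (1 - t) *: y).

Definition grad k (f : 'rV[R]_k -> R) (x : 'rV[R]_k) : 'rV[R]_k :=
  \row_j ('D_(delta_mx 0 j) f x).

Definition twice_diff_on k (S : set 'rV[R]_k) (f : 'rV[R]_k -> R) : Prop :=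
  exists U : set 'rV[R]_k, [/\ open U, S `<=` U &
    forall x, U x -> differentiable f x /\ forall v, differentiable ('D_v f) x].

(* Hessian >= s I on S :  v^T (Hess f x) v >= s |v|^2 *)
Definition hess_ge k (S : set 'rV[R]_k) (f : 'rV[R]_k -> R) (s : R) : Prop :=
  forall x v, S x -> s * sqnorm v <= 'D_v ('D_v f) x.

Definition lip_grad_on k (S : set 'rV[R]_k) (f : 'rV[R]_k -> R) : Prop :=
  exists L : R, forall x y, S x -> S y ->
    enorm (grad f x - grad f y) <= L * enorm (x - y).

Variables (N : nat) (ns : 'I_N -> nat) (m : nat).
Definition blockvec := forall i : 'I_N, 'rV[R]_(ns i).

Definition inZ (Zs : forall i, set 'rV[R]_(ns i)) (z : blockvec) : Prop :=
  forall i, Zs i (z i).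
Definition zdist2 (z z' : blockvec) : R := \sum_(i < N) sqnorm (z i - z' i).
Definition cost (C : forall i, 'rV[R]_(ns i) -> R) (z : blockvec) : R :=
  \sum_(i < N) C i (z i).
(* g(z) = R z + g0, with R = [R_1 ... R_N] split into column blocks
   (row-vector convention: z_i *m Rb i) *)
Definition gfun (Rb : forall i, 'M[R]_(ns i, m)) (g0 : 'rV[R]_m) (z : blockvec)
  : 'rV[R]_m := \sum_(i < N) (z i *m Rb i) + g0.
Definition frobR (Rb : forall i, 'M[R]_(ns i, m)) : R :=
  Num.sqrt (\sum_(i < N) frob2 (Rb i)).

Definition Lagr C Rb g0 (phi : R) (z : blockvec) (mu : 'rV[R]_m) : R :=
  cost C z + dotr mu (gfun Rb g0 z) - phi / 2 * sqnorm mu.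

(* h(mu) = min_{z in Z} L(z, mu)  (the inf is attained: Z compact, L continuous) *)
Definition hdual Zs C Rb g0 phi (mu : 'rV[R]_m) : R :=
  inf [set y | exists2 z, inZ Zs z & y = Lagr C Rb g0 phi z mu].

Definition saddle Zs C Rb g0 phi (zs : blockvec) (mus : 'rV[R]_m) : Prop :=
  [/\ inZ Zs zs, nonneg mus &
     forall z mu, inZ Zs z -> nonneg mu ->
       Lagr C Rb g0 phi zs mu <= Lagr C Rb g0 phi zs mus /\
       Lagr C Rb g0 phi zs mus <= Lagr C Rb g0 phi z mus].

Definition slater Zs Rb g0 : Prop :=
  exists2 z, inZ Zs z & forall j, gfun Rb g0 z 0 j < 0.
End Defs.

From HB Require Import structures.
From mathcomp Require Import all_boot all_order all_algebra.
From mathcomp Require Import all_classical all_reals all_analysis.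
From mathcomp Require Import ring lra.
Import Order.TTheory GRing.Theory Num.Theory.
Import numFieldNormedType.Exports.
Local Open Scope classical_set_scope.
Local Open Scope ring_scope.

Set Implicit Arguments. Unset Strict Implicit. Unset Printing Implicit Defensive.

(* By Danskin's theorem the dual function h is differentiable with
   grad h(mu) = g(z(mu)) - phi mu, where z(mu) minimises L(., mu) over Z.  The
   sigma_c-strong convexity of the cost makes z(mu) depend
   (sigma_g / sigma_c)-Lipschitz continuously on mu, so grad h is
   (sigma_g^2 / sigma_c + phi)-Lipschitz.  The algorithm is projected gradient
   ascent on h; the projection is nonexpansive and fixes mu*, hence
   |mu(k+1) - mu*|^2 <= (1 - 2 eps sigma_h + eps^2 (sigma_g^2/sigma_c + phi)^2)
   |mu(k) - mu*|^2, a contraction for the admissible step sizes, and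
   |z(k+1) - z*| <= (sigma_g / sigma_c) |mu(k) - mu*|. *)

Section RealFacts.
Variable R : realType.
Implicit Types a b c d e p r t w x : R.

Lemma le_of_onem_mul_le c d : (forall t, 0 < t <= 1 -> (1 - t) * c <= d) -> c <= d.
Proof.
move=> le_d; have d0 : 0 <= d by have := le_d 1; rewrite ltr01 lexx subrr mul0r; apply.
rewrite leNgt; apply/negP => dc; have c0 : 0 < c by lra.
pose t := (c - d) / (2 * c).
have t0 : 0 < t by rewrite divr_gt0 ?subr_gt0 ?mulr_gt0.
have t1 : t <= 1 by rewrite ler_pdivrMr ?mulr_gt0 //; lra.
have := le_d t; rewrite t0 t1 => /(_ isT).
have -> : (1 - t) * c = (c + d) / 2 by rewrite /t; field; rewrite gt_eqF.
lra.
Qed.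

Lemma sqr_le_mul_of_quadratic a b w : 0 <= a ->
  (forall l, 2 * l * w <= l ^+ 2 * a + b) -> w ^+ 2 <= a * b.
Proof.
move=> a0 quad_ge; have [a_0|an0] := eqVneq a 0.
  rewrite {}a_0 in quad_ge *.
  suff -> : w = 0 by rewrite expr0n mul0r.
  apply/eqP/negPn/negP => wn0; have := quad_ge ((b + 1) / (2 * w)).
  have -> : 2 * ((b + 1) / (2 * w)) * w = b + 1 by field.
  rewrite mulr0 add0r; lra.
have ap : 0 < a by rewrite lt_def an0 a0.
have := quad_ge (w / a).
have -> : 2 * (w / a) * w = 2 * (w ^+ 2 / a) by field.
have -> : (w / a) ^+ 2 * a = w ^+ 2 / a by field.
by rewrite -ler_pdivrMl // mulrC; lra.
Qed.

Lemma neg_le_add_of_sqr_le x a b : 0 <= a -> 0 <= b -> x ^+ 2 <= 4 * a * b -> - x <= a + b.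
Proof.
move=> a0 b0 x_le; rewrite leNgt; apply/negP => lt_x.
have := sqr_ge0 (a - b); nra.
Qed.

Lemma sqr_maxr0B_le a b : (Num.max a 0 - Num.max b 0) ^+ 2 <= (a - b) ^+ 2.
Proof.
have := sqr_ge0 (a - b); rewrite !maxEle.
by case: (leP a 0) => ?; case: (leP b 0) => ?; rewrite ?subr0 ?sub0r ?sqrrN; nra.
Qed.

(* The hypothesis forces the complementarity conditions [a <= 0] and [x * a = 0]. *)
Lemma maxr0_step_fixed a p e x : 0 < p -> 0 <= e -> 0 <= x ->
  (forall t, - x <= t -> t * a - p / 2 * t ^+ 2 <= 0) -> Num.max (x + e * a) 0 = x.
Proof.
move=> p0 e0 x0 x_max.
have a_le0 : a <= 0.
  rewrite leNgt; apply/negP => a0.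
  have := x_max (a / p); rewrite (le_trans _ (ltW (divr_gt0 a0 p0))) ?oppr_le0 //.
  have -> : a / p * a - p / 2 * (a / p) ^+ 2 = a ^+ 2 / (2 * p) by field; rewrite gt_eqF.
  by move=> /(_ isT); rewrite leNgt divr_gt0 ?exprn_gt0 ?mulr_gt0.
have [->|x_neq0] := eqVneq x 0.
  by rewrite add0r; apply/max_idPr; rewrite mulr_ge0_le0.
suff -> : a = 0 by rewrite mulr0 addr0; apply/max_idPl.
apply/eqP; rewrite eq_le a_le0 leNgt; apply/negP => a_lt0.
set t := Num.max (- x) (a / p).
have [xt at_] : - x <= t /\ a / p <= t by rewrite /t le_max lexx le_max lexx orbT.
have t_lt0 : t < 0 by rewrite /t gt_max oppr_lt0 lt_def x_neq0 x0 pmulr_llt0 ?invr_gt0.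
have := x_max t xt; rewrite ler_pdivrMr // in at_; nra.
Qed.

Lemma contraction_factor_lt1 e (s : R) p : 0 < e -> 0 < p -> e < 2 * s / p ->
  1 - 2 * e * s + e ^+ 2 * p < 1.
Proof.
move=> e0 p0; rewrite ltr_pdivlMr // -(ltr_pM2l e0); lra.
Qed.

Lemma cvg_contraction0 (u : nat -> R) r (n0 : nat) : r < 1 ->
  (forall k, 0 <= u k) -> (forall k, (n0 <= k)%N -> u k.+1 <= r * u k) -> u @ \oo --> 0.
Proof.
move=> r1 u0 u_le; set r' := Num.max r 0.
have r'0 : 0 <= r' by rewrite le_max lexx orbT.
have rr' : r <= r' by rewrite le_max lexx.
have geo k : u (k + n0)%N <= geometric (u n0) r' k.
  elim: k => [|k IH]; first by rewrite add0n /= expr0 mulr1.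
  rewrite addSn /= exprS mulrCA; apply: le_trans (u_le _ (leq_addl _ _)) _.
  by apply: le_trans (ler_wpM2r (u0 _) rr') _; rewrite ler_wpM2l.
rewrite -(cvg_shiftn n0); apply: (squeeze_cvgr _ (cvg_cst 0)).
  - by near=> k; rewrite u0 /=; apply: geo.
  - by apply: cvg_geometric; rewrite ger0_norm // gt_max r1 ltr01.
Unshelve. all: by end_near.
Qed.

Lemma cvg0_of_le_shift (u v : nat -> R) c (n0 : nat) : u @ \oo --> 0 ->
  (forall k, (n0 <= k)%N -> 0 <= v k.+1 <= c * u k) -> v @ \oo --> 0.
Proof.
move=> u_cvg v_le; rewrite -(cvg_shiftn 1).
have cu_cvg : (fun k => c * u k) @ \oo --> (0 : R) by rewrite -(mulr0 c); apply: cvgMr.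
apply: (squeeze_cvgr _ (cvg_cst 0) cu_cvg); near=> k; rewrite /= addn1; apply: v_le.
by near: k; exists n0.
Unshelve. all: by end_near.
Qed.

End RealFacts.

Section Convexity1D.
Variable R : realType.

Lemma MVT_in_segment (g dg : R -> R) (lo hi a b : R) :
  (forall x, lo <= x <= hi -> is_derive x 1 g (dg x)) -> lo <= a -> a <= b -> b <= hi ->
  exists2 c, a <= c <= b & g b - g a = dg c * (b - a).
Proof.
move=> dgP loa ab bhi.
have inI x : a <= x <= b -> lo <= x <= hi.
  by case/andP=> ax xb; rewrite (le_trans loa ax) (le_trans xb bhi).
have dg_ab x : x \in `]a, b[ -> is_derive x 1 g (dg x).
  by move=> /itvP x_ab; apply/dgP/inI; rewrite !x_ab.
have g_cont : {within `[a, b], continuous g}.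
  apply: derivable_within_continuous => x /itvP x_ab.
  by have [] := dgP x (inI x _); rewrite ?x_ab.
have [c /itvP c_ab ->] := MVT_segment ab dg_ab g_cont.
by exists c; rewrite ?c_ab.
Qed.

Lemma is_derive_half_sqr (k x : R) : is_derive x 1 (fun y : R => k / 2 * y ^+ 2) (k * x).
Proof. by apply: is_derive_eq; rewrite /GRing.scale /=; field. Qed.

Lemma strong_convex_chord (f df ddf : R -> R) (k t : R) :
  (forall x : R, 0 <= x <= 1 -> is_derive x 1 f (df x)) ->
  (forall x : R, 0 <= x <= 1 -> is_derive x 1 df (ddf x)) ->
  (forall x : R, 0 <= x <= 1 -> k <= ddf x) -> 0 <= t <= 1 ->
  f t <= (1 - t) * f 0 + t * f 1 - t * (1 - t) / 2 * k.
Proof.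
move=> f_df df_ddf k_le /andP[t0 t1].
(* [p] has a nondecreasing derivative, so the slope of [p] on [0, t] is at most
   its slope on [t, 1]; this is the chord inequality for [p]. *)
pose p (x : R) := f x - k / 2 * x ^+ 2.
pose dp (x : R) := df x - k * x.
have p_dp (x : R) : 0 <= x <= 1 -> is_derive x 1 p (dp x).
  by move=> x01; apply: is_deriveB; [exact: f_df | exact: is_derive_half_sqr].
have dp_ddp (x : R) : 0 <= x <= 1 -> is_derive x 1 dp (ddf x - k).
  move=> x01; apply: is_deriveB; first exact: df_ddf.
  by apply: is_derive_eq; rewrite /GRing.scale /= mulr1.
have dp_mono (a b : R) : 0 <= a -> a <= b -> b <= 1 -> dp a <= dp b.
  move=> a0 ab b1; have [c /andP[ac cb] e] := MVT_in_segment dp_ddp a0 ab b1.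
  have := k_le c; rewrite (le_trans a0 ac) (le_trans cb b1) => /(_ isT) kc.
  by rewrite -subr_ge0 e mulr_ge0 // subr_ge0.
have [eta /andP[eta0 etat] e1] := MVT_in_segment p_dp (lexx 0) t0 t1.
have [xi /andP[txi xi1] e2] := MVT_in_segment p_dp t0 t1 (lexx 1).
have t1' : 0 <= 1 - t by rewrite subr_ge0.
have dp_eta_xi : 0 <= dp xi - dp eta.
  by rewrite subr_ge0 dp_mono // (le_trans etat txi).
have := mulr_ge0 (mulr_ge0 t0 t1') dp_eta_xi.
move: e1 e2; rewrite /p /dp; nra.
Qed.

End Convexity1D.

Section Directional.
Variables (R : realType) (V : normedModType R).

Lemma is_derive_line (F : V -> R) (a v : V) (s : R) :
  derivable F (s *: v + a) v ->
  is_derive s 1 (fun r : R => F (r *: v + a)) ('D_v F (s *: v + a)).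
Proof.
have E : (fun h : R => h^-1 *: ((fun r => F (r *: v + a)) (h *: 1 + s) - F (s *: v + a)))
  = (fun h : R => h^-1 *: (F (h *: v + (s *: v + a)) - F (s *: v + a))).
  by apply: funext => h; rewrite scalerDl addrA -[h *: 1]/(h * 1) mulr1.
by move=> dF; split; rewrite /derivable /derive /= E.
Qed.

Lemma derive_of_sqr_remainder (F : V -> R) (x v : V) (a B : R) :
  (forall t : R, `|F (t *: v + x) - F x - t * a| <= B * t ^+ 2) -> 'D_v F x = a.
Proof.
move=> rem; rewrite /derive; apply: cvg_lim => //.
apply/cvgrPdist_le => e e0; near=> t.
have t0 : t != 0 by near: t; exact: nbhs_dnbhs_neq.
have tB : `|t| * (`|B| + 1) < e.
  by rewrite -ltr_pdivlMr ?ltr_pwDr //; near: t; apply: dnbhs0_lt; rewrite divr_gt0 ?ltr_pwDr.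
rewrite /= /GRing.scale /=.
have -> : a - t^-1 * (F (t *: v + x) - F x) = - (t^-1 * (F (t *: v + x) - F x - t * a)).
  by field.
rewrite normrN normrM normrV ?unitfE // ler_pdivrMl ?normr_gt0 //.
apply: le_trans (rem t) _; rewrite -(real_normK (num_real t)).
have := normr_ge0 t; have := ler_norm B; nra.
Unshelve. all: by end_near.
Qed.

End Directional.

Section Euclid.
Variables (R : realType) (k : nat).
Implicit Types u v w : 'rV[R]_k.

Lemma dotrC u v : dotr u v = dotr v u.
Proof. by apply: eq_bigr => j _; rewrite mulrC. Qed.

Lemma dotrDl u v w : dotr (u + v) w = dotr u w + dotr v w.
Proof. by rewrite /dotr -big_split; apply: eq_bigr => j _; rewrite mxE mulrDl. Qed.

Lemma dotrZl (a : R) u v : dotr (a *: u) v = a * dotr u v.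
Proof. by rewrite /dotr mulr_sumr; apply: eq_bigr => j _; rewrite mxE mulrA. Qed.

Lemma dotrNl u v : dotr (- u) v = - dotr u v.
Proof. by rewrite -scaleN1r dotrZl mulN1r. Qed.

Lemma dotrBl u v w : dotr (u - v) w = dotr u w - dotr v w.
Proof. by rewrite dotrDl dotrNl. Qed.

Lemma dotrDr u v w : dotr u (v + w) = dotr u v + dotr u w.
Proof. by rewrite dotrC dotrDl !(dotrC u). Qed.

Lemma dotrZr (a : R) u v : dotr u (a *: v) = a * dotr u v.
Proof. by rewrite dotrC dotrZl dotrC. Qed.

Lemma dotrNr u v : dotr u (- v) = - dotr u v.
Proof. by rewrite !(dotrC u) dotrNl. Qed.

Lemma dotrBr u v w : dotr u (v - w) = dotr u v - dotr u w.
Proof. by rewrite !(dotrC u) dotrBl. Qed.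

Lemma dotr_delta (j : 'I_k) u : dotr (delta_mx 0 j) u = u 0 j.
Proof.
rewrite /dotr (bigD1 j) //= big1 => [|i ij]; first by rewrite mxE !eqxx mul1r addr0.
by rewrite mxE eqxx (negbTE ij) mul0r.
Qed.

Lemma sqnormE u : sqnorm u = dotr u u.
Proof. by apply: eq_bigr => j _; rewrite expr2. Qed.

Lemma sqnorm_ge0 u : 0 <= sqnorm u.
Proof. by apply: sumr_ge0 => j _; apply: sqr_ge0. Qed.

Lemma dotr_sqr_le u v : dotr u v ^+ 2 <= sqnorm u * sqnorm v.
Proof.
apply: sqr_le_mul_of_quadratic; first exact: sqnorm_ge0.
move=> l; rewrite /dotr /sqnorm !mulr_sumr -big_split /=; apply: ler_sum => j _.
by have := sqr_ge0 (l * u 0 j - v 0 j); nra.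
Qed.

Lemma projpos_nonneg u : nonneg (projpos u).
Proof. by move=> j; rewrite mxE le_max lexx orbT. Qed.

Lemma sqnorm_projposB_le u v : sqnorm (projpos u - projpos v) <= sqnorm (u - v).
Proof. by apply: ler_sum => j _; rewrite !mxE sqr_maxr0B_le. Qed.

Lemma sqnorm_delta (j : 'I_k) : sqnorm (delta_mx 0 j : 'rV[R]_k) = 1.
Proof. by rewrite sqnormE dotr_delta mxE !eqxx. Qed.

Lemma cvxset_segment (S : set 'rV[R]_k) u v (t : R) : cvxset S -> S u -> S v ->
  0 <= t <= 1 -> S (t *: (v - u) + u).
Proof.
move=> cvx Su Sv t01; have := cvx _ _ _ Sv Su t01.
by rewrite scalerBl scale1r scalerBr addrCA addrC.
Qed.

End Euclid.

Section Blocks.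
Variables (R : realType) (N : nat) (ns : 'I_N -> nat) (m : nat).
Variables (Rb : forall i, 'M[R]_(ns i, m)) (g0 : 'rV[R]_m).
Implicit Types z : blockvec R ns.

Lemma zdist2_ge0 z z' : 0 <= zdist2 z z'.
Proof. by apply: sumr_ge0 => i _; apply: sqnorm_ge0. Qed.

Lemma zdist2C z z' : zdist2 z z' = zdist2 z' z.
Proof. by apply: eq_bigr => i _; apply: eq_bigr => j _; rewrite !mxE -sqrrN opprB. Qed.

Lemma gfunB z z' : gfun Rb g0 z - gfun Rb g0 z' = \sum_i (z i - z' i) *m Rb i.
Proof.
rewrite /gfun opprD addrACA subrr addr0 -sumrB.
by apply: eq_bigr => i _; rewrite mulmxBl.
Qed.

Lemma frobR_sqr : frobR Rb ^+ 2 = \sum_i frob2 (Rb i).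
Proof.
by rewrite sqr_sqrtr //; do 3![apply: sumr_ge0 => ? _]; apply: sqr_ge0.
Qed.

Lemma sqnorm_gfunB_le z z' :
  sqnorm (gfun Rb g0 z - gfun Rb g0 z') <= frobR Rb ^+ 2 * zdist2 z z'.
Proof.
pose F (j : 'I_m) := \sum_i \sum_(a < ns i) Rb i a j ^+ 2.
have entry_le j : (gfun Rb g0 z - gfun Rb g0 z') 0 j ^+ 2 <= zdist2 z z' * F j.
  rewrite gfunB summxE; apply: sqr_le_mul_of_quadratic; first exact: zdist2_ge0.
  move=> l; rewrite /zdist2 /sqnorm /F !mulr_sumr -big_split /=; apply: ler_sum => i _.
  rewrite mxE !mulr_sumr -big_split /=; apply: ler_sum => a _.
  by have := sqr_ge0 (l * (z i - z' i) 0 a - Rb i a j); nra.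
apply: le_trans (ler_sum _ (fun j _ => entry_le j)) _.
rewrite -mulr_sumr mulrC ler_wpM2r ?zdist2_ge0 // frobR_sqr /F exchange_big /=.
by apply: ler_sum => i _; rewrite exchange_big.
Qed.

End Blocks.

Section Lagrangian.
Variables (R : realType) (N : nat) (ns : 'I_N -> nat) (m : nat).
Variables (Zs : forall i, set 'rV[R]_(ns i)) (C : forall i, 'rV[R]_(ns i) -> R).
Variables (Rb : forall i, 'M[R]_(ns i, m)) (g0 : 'rV[R]_m) (phi : R).
Arguments Zs : clear implicits.
Arguments C : clear implicits.

Local Notation L := (Lagr C Rb g0 phi).
Local Notation g := (gfun Rb g0).
Implicit Types (z : blockvec R ns) (mu v : 'rV[R]_m).

Lemma Lagr_shift z mu v (t : R) :
  L z (t *: v + mu) = L z mu + t * dotr v (g z - phi *: mu) - phi / 2 * t ^+ 2 * sqnorm v.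
Proof.
rewrite /Lagr !sqnormE !(dotrDl, dotrDr, dotrNr, dotrZl, dotrZr) (dotrC mu v).
by field.
Qed.

Lemma Lagr_cross z z' mu mu' :
  L z mu - L z' mu + (L z' mu' - L z mu') = dotr (mu - mu') (g z - g z').
Proof. by rewrite /Lagr dotrBl !dotrBr; ring. Qed.

Lemma gfun_segment z z' (t : R) :
  g (fun i => t *: (z i - z' i) + z' i) = t *: (g z - g z') + g z'.
Proof.
rewrite gfunB scaler_sumr /gfun addrA -big_split /=.
by congr (_ + _); apply: eq_bigr => i _; rewrite mulmxDl scalemxAl.
Qed.

Definition is_Lagr_min mu z0 := inZ Zs z0 /\ forall z, inZ Zs z -> L z0 mu <= L z mu.

Local Notation h := (hdual Zs C Rb g0 phi).

Lemma hdual_bounds mu z0 (lo : R) : inZ Zs z0 ->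
  (forall z, inZ Zs z -> lo <= L z mu) -> lo <= h mu <= L z0 mu.
Proof.
move=> Z0 lo_le; apply/andP; split.
  by apply: lb_le_inf => [|_ [z Zz ->]]; [exists (L z0 mu), z0 | exact: lo_le].
by apply: ge_inf; [exists lo => _ [z Zz ->]; exact: lo_le | exists z0].
Qed.

Lemma hdual_Lagr_min mu z0 : is_Lagr_min mu z0 -> h mu = L z0 mu.
Proof.
by move=> [Z0 z0_min]; apply/eqP; rewrite eq_le andbC; apply: hdual_bounds.
Qed.

Lemma projpos_step_fixed zs mus (eps : R) : 0 < phi -> 0 <= eps -> nonneg mus ->
  (forall mu, nonneg mu -> L zs mu <= L zs mus) ->
  projpos (mus + eps *: (g zs - phi *: mus)) = mus.
Proof.
move=> phi0 eps0 mus0 mus_max; apply/rowP => j.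
set w := g zs - phi *: mus; rewrite 3!mxE.
apply: (@maxr0_step_fixed _ _ phi) => // t t_ge.
have nn : nonneg (t *: delta_mx 0 j + mus).
  move=> i; rewrite !mxE; have [<-|ji] := eqVneq j i; last by rewrite mulr0 add0r.
  by rewrite eqxx mulr1 -lerBlDr sub0r.
have := mus_max _ nn; rewrite Lagr_shift -/w dotr_delta sqnorm_delta mulr1; lra.
Qed.

Section StrongConvexity.
Variable sc : R.
Hypothesis Zs_convex : forall i, cvxset (Zs i).
Hypothesis C_twice_diff : forall i, twice_diff_on (Zs i) (C i).
Hypothesis C_hess_ge : forall i, hess_ge (Zs i) (C i) sc.

Lemma inZ_segment z0 z (t : R) : inZ Zs z0 -> inZ Zs z -> 0 <= t <= 1 ->
  inZ Zs (fun i => t *: (z i - z0 i) + z0 i).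
Proof. by move=> Z0 Zz t01 i; apply: cvxset_segment. Qed.

Lemma C_strong_convex i (x y : 'rV[R]_(ns i)) (t : R) :
  Zs i x -> Zs i y -> 0 <= t <= 1 ->
  C i (t *: (y - x) + x)
    <= (1 - t) * C i x + t * C i y - t * (1 - t) / 2 * (sc * sqnorm (y - x)).
Proof.
move=> Zx Zy t01; have [U [_ SU dU]] := C_twice_diff i.
have dC s : 0 <= s <= 1 -> differentiable (C i) (s *: (y - x) + x) /\
    forall w, differentiable ('D_w (C i)) (s *: (y - x) + x).
  by move=> s01; apply/dU/SU; apply: cvxset_segment.
have := @strong_convex_chord _ (fun s => C i (s *: (y - x) + x))
  (fun s => 'D_(y - x) (C i) (s *: (y - x) + x))
  (fun s => 'D_(y - x) ('D_(y - x) (C i)) (s *: (y - x) + x)) (sc * sqnorm (y - x)) t _ _ _ t01.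
rewrite scale0r add0r scale1r subrK; apply.
- by move=> s s01; apply/is_derive_line/diff_derivable; case: (dC s s01).
- by move=> s s01; apply/is_derive_line/diff_derivable; case: (dC s s01).
- by move=> s s01; apply: C_hess_ge; apply: cvxset_segment.
Qed.

Lemma Lagr_strong_convex mu z0 z (t : R) : inZ Zs z0 -> inZ Zs z -> 0 <= t <= 1 ->
  L (fun i => t *: (z i - z0 i) + z0 i) mu
    <= (1 - t) * L z0 mu + t * L z mu - t * (1 - t) / 2 * (sc * zdist2 z z0).
Proof.
move=> Z0 Zz t01.
have cost_le : cost C (fun i => t *: (z i - z0 i) + z0 i)
    <= (1 - t) * cost C z0 + t * cost C z - t * (1 - t) / 2 * (sc * zdist2 z z0).
  rewrite /cost /zdist2 !mulr_sumr -big_split -sumrB /=.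
  by apply: ler_sum => i _; apply: C_strong_convex.
rewrite /Lagr gfun_segment dotrDr dotrZr dotrBr; lra.
Qed.

Lemma Lagr_min_growth mu z0 : is_Lagr_min mu z0 ->
  forall z, inZ Zs z -> L z0 mu + sc / 2 * zdist2 z z0 <= L z mu.
Proof.
move=> [Z0 z0_min] z Zz; rewrite addrC -lerBrDr.
apply: le_of_onem_mul_le => t /andP[t0 t1].
have t01 : 0 <= t <= 1 by rewrite ltW.
have := le_trans (z0_min _ (inZ_segment Z0 Zz t01))
  (Lagr_strong_convex mu Z0 Zz t01).
by move=> min_le; rewrite -(ler_pM2l t0); lra.
Qed.

Hypothesis sc_gt0 : 0 < sc.

Lemma dotr_gfunB_ge z z0 v (t : R) :
  - (t ^+ 2 * frobR Rb ^+ 2 / (2 * sc) * sqnorm v)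
    <= sc / 2 * zdist2 z z0 + t * dotr v (g z - g z0).
Proof.
have D0 := zdist2_ge0 z z0; have V0 := sqnorm_ge0 v.
have F0 := sqr_ge0 (frobR Rb); have t0 := sqr_ge0 t.
suff : - (t * dotr v (g z - g z0))
    <= sc / 2 * zdist2 z z0 + t ^+ 2 * frobR Rb ^+ 2 / (2 * sc) * sqnorm v by lra.
apply: neg_le_add_of_sqr_le.
- by apply: mulr_ge0 => //; apply: divr_ge0 => //; apply: ltW.
- apply: mulr_ge0 => //; apply: divr_ge0; first exact: mulr_ge0.
  by apply: mulr_ge0 => //; apply: ltW.
have -> : 4 * (sc / 2 * zdist2 z z0) * (t ^+ 2 * frobR Rb ^+ 2 / (2 * sc) * sqnorm v)
    = t ^+ 2 * (sqnorm v * (frobR Rb ^+ 2 * zdist2 z z0)) by field; rewrite gt_eqF.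
rewrite exprMn ler_wpM2l //; apply: le_trans (dotr_sqr_le _ _) _.
by rewrite ler_wpM2l //; apply: sqnorm_gfunB_le.
Qed.

Hypothesis phi_ge0 : 0 <= phi.

Lemma derive_hdual mu z0 v : is_Lagr_min mu z0 ->
  'D_v h mu = dotr v (g z0 - phi *: mu).
Proof.
move=> z0_min; have [Z0 _] := z0_min.
(* [t |-> h (t v + mu)] lies below [L z0 (t v + mu)] and, by quadratic growth,
   above a parabola; both are tangent at [t = 0] with slope [a]. *)
set a := dotr v _; set B := (phi / 2 + frobR Rb ^+ 2 / (2 * sc)) * sqnorm v.
apply: (@derive_of_sqr_remainder _ _ _ _ _ _ B) => t.
have lower z : inZ Zs z -> L z0 mu + t * a - B * t ^+ 2 <= L z (t *: v + mu).
  move=> Zz; rewrite Lagr_shift.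
  have := Lagr_min_growth z0_min Zz; have := dotr_gfunB_ge z z0 v t.
  have -> : dotr v (g z - phi *: mu) = a + dotr v (g z - g z0) by rewrite /a !dotrBr; ring.
  rewrite /B; lra.
have /andP[lo up] := hdual_bounds Z0 lower.
rewrite Lagr_shift -/a in up.
have F0 : 0 <= frobR Rb ^+ 2 / (2 * sc) by rewrite divr_ge0 ?sqr_ge0 ?mulr_ge0 ?ltW.
have P0 : 0 <= phi / 2 by rewrite divr_ge0.
have := mulr_ge0 (mulr_ge0 F0 (sqnorm_ge0 v)) (sqr_ge0 t).
have := mulr_ge0 (mulr_ge0 P0 (sqr_ge0 t)) (sqnorm_ge0 v).
rewrite (hdual_Lagr_min z0_min) ler_norml /B in lo * => ? ?.
by apply/andP; split; lra.
Qed.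

Lemma grad_hdual mu z0 : is_Lagr_min mu z0 -> grad h mu = g z0 - phi *: mu.
Proof. by move=> z0_min; apply/rowP => j; rewrite mxE (derive_hdual _ z0_min) dotr_delta. Qed.

Lemma Lagr_min_zdist2_le mu1 mu2 z1 z2 : is_Lagr_min mu1 z1 -> is_Lagr_min mu2 z2 ->
  sc * zdist2 z1 z2 <= - dotr (mu1 - mu2) (g z1 - g z2).
Proof.
move=> min1 min2; have [Z1 _] := min1; have [Z2 _] := min2.
have := Lagr_min_growth min1 Z2; have := Lagr_min_growth min2 Z1.
have := Lagr_cross z1 z2 mu1 mu2; rewrite (zdist2C z2 z1); lra.
Qed.

Lemma zdist2_le_dual mu1 mu2 z1 z2 : is_Lagr_min mu1 z1 -> is_Lagr_min mu2 z2 ->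
  zdist2 z1 z2 <= frobR Rb ^+ 2 / sc ^+ 2 * sqnorm (mu1 - mu2).
Proof.
move=> min1 min2; have := Lagr_min_zdist2_le min1 min2.
have := dotr_sqr_le (mu1 - mu2) (g z1 - g z2); have := sqnorm_gfunB_le Rb g0 z1 z2.
set D := zdist2 z1 z2; set P := dotr _ _.
set M := sqnorm (mu1 - mu2); set W := sqnorm (g z1 - g z2).
move=> W_le P_le D_le; rewrite mulrAC ler_pdivlMr ?exprn_gt0 //.
have [D0|D_gt0] := eqVneq D 0.
  by rewrite D0 mul0r mulr_ge0 ?sqr_ge0 ?sqnorm_ge0.
have Dpos : 0 < D by rewrite lt_def D_gt0 zdist2_ge0.
have scD0 : 0 <= sc * D by rewrite mulr_ge0 ?ltW.
have scD : (sc * D) ^+ 2 <= P ^+ 2.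
  by rewrite -[P ^+ 2]sqrrN ler_pXn2r ?nnegrE ?(le_trans scD0 D_le).
have := le_trans scD (le_trans P_le (ler_wpM2l (sqnorm_ge0 _) W_le)).
by move=> scD_le; rewrite -(ler_pM2r Dpos); rewrite -/M in scD_le; lra.
Qed.

Lemma grad_hdual_lipschitz mu1 mu2 z1 z2 : is_Lagr_min mu1 z1 -> is_Lagr_min mu2 z2 ->
  sqnorm (grad h mu1 - grad h mu2) <= (frobR Rb ^+ 2 / sc + phi) ^+ 2 * sqnorm (mu1 - mu2).
Proof.
move=> min1 min2; rewrite (grad_hdual min1) (grad_hdual min2).
have -> : g z1 - phi *: mu1 - (g z2 - phi *: mu2) = (g z1 - g z2) - phi *: (mu1 - mu2).
  by apply/rowP => j; rewrite !mxE; ring.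
have D_le := zdist2_le_dual min1 min2; have W_le := sqnorm_gfunB_le Rb g0 z1 z2.
have P_le := dotr_sqr_le (mu1 - mu2) (g z1 - g z2).
set d := mu1 - mu2 in D_le P_le *; set w := g z1 - g z2 in W_le P_le *.
clearbody d w; rewrite sqnormE dotrBl !dotrBr !dotrZl !dotrZr -!sqnormE (dotrC w d).
set X := frobR Rb ^+ 2 / sc; set P := dotr d w in P_le *.
set M := sqnorm d in D_le P_le *; set W := sqnorm w in W_le P_le *.
have X0 : 0 <= X by rewrite divr_ge0 ?sqr_ge0 ?ltW.
have M0 : 0 <= M by apply: sqnorm_ge0.
have W_X : W <= X ^+ 2 * M.
  have -> : X ^+ 2 * M = frobR Rb ^+ 2 * (frobR Rb ^+ 2 / sc ^+ 2 * M).
    by rewrite /X; field; rewrite gt_eqF.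
  exact: le_trans W_le (ler_wpM2l (sqr_ge0 _) D_le).
have XM0 : 0 <= X * M / 2 by rewrite divr_ge0 // mulr_ge0.
(* [`|P| <= X * M] since [P ^+ 2 <= M * W <= (X * M) ^+ 2] *)
have P_X : - P <= X * M / 2 + X * M / 2.
  apply: (neg_le_add_of_sqr_le XM0 XM0); apply: le_trans P_le _.
  have -> : 4 * (X * M / 2) * (X * M / 2) = M * (X ^+ 2 * M) by field.
  by rewrite ler_wpM2l.
have := ler_wpM2l phi_ge0 P_X; lra.
Qed.

Lemma dual_step_contraction (sg sh eps : R) mu1 mus z1 zs :
  frobR Rb <= sg -> 0 <= eps -> is_Lagr_min mu1 z1 -> is_Lagr_min mus zs ->
  projpos (mus + eps *: (g zs - phi *: mus)) = mus ->
  dotr (grad h mu1 - grad h mus) (mu1 - mus) <= - sh * sqnorm (mu1 - mus) ->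
  sqnorm (projpos (mu1 + eps *: (g z1 - phi *: mu1)) - mus)
    <= (1 - 2 * eps * sh + eps ^+ 2 * (sg ^+ 2 / sc + phi) ^+ 2) * sqnorm (mu1 - mus).
Proof.
move=> F_le eps0 min1 mins mus_fixed h_concave.
rewrite -[X in projpos _ - X]mus_fixed; apply: le_trans (sqnorm_projposB_le _ _) _.
rewrite -(grad_hdual min1) -(grad_hdual mins).
have Lip := grad_hdual_lipschitz min1 mins.
have -> : mu1 + eps *: grad h mu1 - (mus + eps *: grad h mus)
    = mu1 - mus + eps *: (grad h mu1 - grad h mus).
  by rewrite scalerBr opprD addrACA.
set d := mu1 - mus in Lip h_concave *; set q := grad h mu1 - grad h mus in Lip h_concave *.
clearbody d q; rewrite sqnormE dotrDl !dotrDr !dotrZl !dotrZr -!sqnormE (dotrC d q).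
have F0 : 0 <= frobR Rb by apply: sqrtr_ge0.
have Lip_le : (frobR Rb ^+ 2 / sc + phi) ^+ 2 <= (sg ^+ 2 / sc + phi) ^+ 2.
  have X0 : 0 <= frobR Rb ^+ 2 / sc + phi.
    by apply: addr_ge0 => //; apply: divr_ge0; [apply: sqr_ge0 | apply: ltW].
  have X_le : frobR Rb ^+ 2 / sc + phi <= sg ^+ 2 / sc + phi.
    by rewrite lerD2r ler_pM2r ?invr_gt0 // !expr2 ler_pM.
  by rewrite !expr2 ler_pM.
have := ler_wpM2l (sqr_ge0 eps) (le_trans Lip (ler_wpM2r (sqnorm_ge0 d) Lip_le)).
have := ler_wpM2l eps0 h_concave; lra.
Qed.

End StrongConvexity.

End Lagrangian.

Theorem corollary1 (R : realType) (N : nat) (ns : 'I_N -> nat) (m : nat)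
  (Zs : forall i : 'I_N, set 'rV[R]_(ns i))
  (C : forall i : 'I_N, 'rV[R]_(ns i) -> R)
  (Rb : forall i : 'I_N, 'M[R]_(ns i, m)) (g0 : 'rV[R]_m)
  (sc sg phi sh eps : R)
  (zstar : blockvec R ns) (mustar : 'rV[R]_m)
  (z : nat -> blockvec R ns) (mu : nat -> 'rV[R]_m) :
  (forall i, Zs i !=set0) ->
  (forall i, cvxset (Zs i)) ->
  (forall i, compact (Zs i)) ->
  0 < sc ->
  (forall i, twice_diff_on (Zs i) (C i)) ->
  (forall i, hess_ge (Zs i) (C i) sc) ->
  (forall i, lip_grad_on (Zs i) (C i)) ->
  0 < sg -> frobR Rb <= sg ->
  slater Zs Rb g0 ->
  0 < phi ->
  saddle Zs C Rb g0 phi zstar mustar ->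
  0 < sh ->
  (forall mu1 mu2 : 'rV[R]_m, nonneg mu1 -> nonneg mu2 ->
     dotr (grad (hdual Zs C Rb g0 phi) mu1 - grad (hdual Zs C Rb g0 phi) mu2)
          (mu1 - mu2) <= - sh * sqnorm (mu1 - mu2)) ->
  nonneg (mu 1%N) ->
  (forall k, (1 <= k)%N ->
     inZ Zs (z k.+1) /\
     forall z', inZ Zs z' ->
       Lagr C Rb g0 phi (z k.+1) (mu k) <= Lagr C Rb g0 phi z' (mu k)) ->
  (forall k, (1 <= k)%N ->
     mu k.+1 = projpos (mu k + eps *: (gfun Rb g0 (z k.+1) - phi *: mu k))) ->
  0 < eps < 2 * sh / (sg ^+ 2 / sc + phi) ^+ 2 ->
  (fun k => sqnorm (mu k - mustar)) @ \oo --> (0 : R) /\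
  (fun k => zdist2 (z k) zstar) @ \oo --> (0 : R).
Proof.
(* Nonemptiness, compactness, Lipschitz gradients and Slater's condition serve
   only to guarantee that the saddle point and the iterates exist, which is
   assumed here. *)
move=> _ Zs_cvx _ sc_gt0 C_td C_hess _ _ F_le _ phi_gt0 [Zst mus_ge0 saddle_le] _
  h_concave mu1_ge0 z_min mu_step /andP[eps_gt0 eps_lt].
have phi_ge0 := ltW phi_gt0; have eps_ge0 := ltW eps_gt0.
have zs_min : is_Lagr_min Zs C Rb g0 phi mustar zstar.
  by split=> // z' Zz; have [] := saddle_le z' mustar Zz mus_ge0.
have mus_fixed : projpos (mustar + eps *: (gfun Rb g0 zstar - phi *: mustar)) = mustar.
  apply: (projpos_step_fixed (C := C)) => // mu' mu'_ge0.
  by have [] := saddle_le zstar mu' Zst mu'_ge0.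
have mu_ge0 k : (1 <= k)%N -> nonneg (mu k).
  by case: k => [|[|k]] // _; rewrite mu_step //; apply: projpos_nonneg.
have mu_cvg : sqnorm (mu k - mustar) @[k --> \oo] --> 0.
  apply: (cvg_contraction0 (n0 := 1) (contraction_factor_lt1 eps_gt0 _ eps_lt))
    => [|k|k k1].
  - by rewrite exprn_gt0 // ltr_wpDl // divr_ge0 ?sqr_ge0 ?ltW.
  - exact: sqnorm_ge0.
  - rewrite (mu_step k k1).
    exact: (dual_step_contraction Zs_cvx C_td C_hess sc_gt0 phi_ge0 F_le eps_ge0
      (z_min k k1) zs_min mus_fixed (h_concave _ _ (mu_ge0 k k1) mus_ge0)).
split=> //.
apply: (cvg0_of_le_shift (c := frobR Rb ^+ 2 / sc ^+ 2) (n0 := 1) mu_cvg) => k k1.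
rewrite zdist2_ge0 /=.
exact: (zdist2_le_dual Zs_cvx C_td C_hess sc_gt0 (z_min k k1) zs_min).
Qed.
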